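(* Constructor has a strategy ensuring $g(n,K_3,S_4)\ge \frac{n}{3}(1+o(1))$ as $n\to\infty$, where $S_4$ is the star with $4$ leaves.
   Context: Constructor-Blocker game: given graphs $H$ and $F$, two players, Constructor and Blocker, alternately claim previously unclaimed edges of the complete graph $K_n$, Constructor moving first. Constructor may only claim an edge if her graph (the edges she has claimed) remains $F$-free (contains no subgraph isomorphic to $F$); Blocker may claim any unclaimed edge. The game ends when Constructor cannot claim any more edges or all edges are claimed. The score is the number of copies of $H$ in Constructor's graph at the end. Constructor maximizes, Blocker minimizes; $g(n,H,F)$ denotes the score under optimal play by both. *)

From mathcomp Require Import all_boot all_order all_algebra.
Set Implicit Arguments. Unset Strict Implicit. Unset Printing Implicit Defensive.
Import Order.TTheory GRing.Theory Num.Theory.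

(* A (simple) graph on a finite vertex type V is a set of edges, each edge
   being a 2-element subset of V. *)

Definition complete_edges (V : finType) : {set {set V}} := [set e : {set V} | #|e| == 2].

Definition embeds_via (VH V : finType) (EH : {set {set VH}}) (E : {set {set V}})
  (f : {ffun VH -> V}) : bool :=
  injectiveb f && [forall e : {set VH}, (e \in EH) ==> ((f @: e) \in E)].

Definition free_of (VF V : finType) (EF : {set {set VF}}) (E : {set {set V}}) : bool :=
  ~~ [exists f : {ffun VF -> V}, embeds_via EF E f].

(* Number of copies of H = (VH,EH) in E: number of distinct (edge sets of)
   subgraphs of E that are images of H under an embedding (H has no isolated
   vertices in our application, so subgraphs are determined by edge sets). *)
Definition copies (VH V : finType) (EH : {set {set VH}}) (E : {set {set V}}) : nat :=
  #|[set [set f @: e | e : {set VH} in EH] | f : {ffun VH -> V} & embeds_via EH E f]|.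

Definition K3 : {set {set 'I_3}} := complete_edges 'I_3.

Definition S4 : {set {set 'I_5}} := [set [set (ord0 : 'I_5); i] | i : 'I_5 & i != ord0].

Section Game.
Variables (VH VF : finType) (EH : {set {set VH}}) (EF : {set {set VF}}) (n : nat).

Definition edgesK : {set {set 'I_n}} := complete_edges 'I_n.

Definition score (C : {set {set 'I_n}}) : nat := copies EH C.

(* an upper bound for all scores (copies is the cardinality of a subset of
   {set {set 'I_n}}), used as neutral element for min over a nonempty set *)
Definition score_top : nat := #|{: {set {set 'I_n}}}|.

Definition cmoves (C B : {set {set 'I_n}}) : {set {set 'I_n}} :=
  [set e in edgesK | (e \notin C) && (e \notin B) && free_of EF (e |: C)].

Definition bmoves (C B : {set {set 'I_n}}) : {set {set 'I_n}} :=
  [set e in edgesK | (e \notin C) && (e \notin B)].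

(* Minimax value of the position (C,B) with [turnC] telling whether it is
   Constructor's turn; [k] is fuel (each move claims an edge, so #|edgesK|
   fuel suffices from the empty position). *)
Fixpoint gval (k : nat) (turnC : bool) (C B : {set {set 'I_n}}) : nat :=
  match k with
  | 0 => score C
  | k'.+1 =>
    if turnC then
      if cmoves C B == set0 then score C
      else \max_(e in cmoves C B) gval k' false (e |: C) B
    else
      if bmoves C B == set0 then score C
      else \big[minn/score_top]_(e in bmoves C B) gval k' true C (e |: B)
  end.

Definition g_value : nat := gval #|edgesK| true set0 set0.

End Game.

(* Constructor keeps her graph C of maximum degree 3, hence S4-free, and plays in
   rounds while at least 3d+7 vertices are fresh: isolated in C and of Blocker
   degree at most d.  In a round she claims xy and xz for fresh x, y, z.  If Blocker
   does not answer with yz she closes the triangle xyz; otherwise she closes a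
   triangle xvw with w in {y, z}, through a vertex v of C-degree at most 1, chosen
   pendant (C-degree 1, Blocker degree at most d) whenever possible so that there are
   never more than two pendant vertices.  Each round creates a triangle and lifts at
   most three vertices above degree 1, so n <= 3 #triangles + #{degree <= 1} stays
   true.  When the rounds stop, a vertex of degree <= 1 is fresh (fewer than 3d+7),
   pendant (at most 2) or of Blocker degree > d (at most 3n/(d+1) of them, since
   Blocker has no more edges than Constructor).  Hence #triangles >= (n - O(d + n/d))/3,
   and d = n/(6D) with D > 1/eps gives the bound. *)

From mathcomp Require Import all_boot all_order all_algebra zify lra.
Set Implicit Arguments. Unset Strict Implicit. Unset Printing Implicit Defensive.

Lemma imset_set2 (T T' : finType) (f : T -> T') (a b : T) :
  f @: [set a; b] = [set f a; f b].
Proof. by rewrite imsetU1 imset_set1. Qed.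

Lemma set2_neq (T : finType) (a b c e : T) : a \notin [set c; e] -> [set a; b] != [set c; e].
Proof. by apply: contra => /eqP <-; rewrite !inE eqxx. Qed.

Lemma set2_neqr (T : finType) (a b c e : T) : b \notin [set c; e] -> [set a; b] != [set c; e].
Proof. by rewrite [[set a; b]]setUC; apply: set2_neq. Qed.

Lemma card_set3 (T : finType) (a b c : T) : #|[set a; b; c]| <= 3.
Proof.
apply: leq_trans (leq_card_setU _ _).1 _; rewrite cards1 addn1 ltnS.
by rewrite cards2; case: (a != b).
Qed.

Lemma cardsU1_leS (T : finType) (a : T) (A : {set T}) : #|a |: A| <= #|A|.+1.
Proof. by rewrite cardsU1 -add1n leq_add2r leq_b1. Qed.

Lemma exists_notin (T : finType) (A X : {set T}) :
  #|X| < #|A| -> exists2 z, z \in A & z \notin X.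
Proof.
move=> XA; case: (boolP (A \subset X)) => [sAX|/subsetPn[z]]; last by exists z.
by move: (subset_leq_card sAX); rewrite leqNgt XA.
Qed.

Lemma card_bigcup_le (I T : finType) (P : {pred I}) (F : I -> {set T}) :
  #|\bigcup_(i in P) F i| <= \sum_(i in P) #|F i|.
Proof.
apply: (big_ind2 (fun (S : {set T}) m => #|S| <= m)); rewrite ?cards0 //.
by move=> A a B b Aa Bb; apply: leq_trans (leq_card_setU A B).1 (leq_add Aa Bb).
Qed.

(** * Copies of a graph and the game value *)

Section Copies.
Variables (VH V : finType) (EH : {set {set VH}}).
Implicit Types G : {set {set V}}.

Definition copy_set G : {set {set {set V}}} :=
  [set [set f @: e | e : {set VH} in EH] | f : {ffun VH -> V} & embeds_via EH G f].

Lemma copiesE G : copies EH G = #|copy_set G|.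
Proof. by []. Qed.

Lemma embeds_via_mono G G' f : G \subset G' -> embeds_via EH G f -> embeds_via EH G' f.
Proof.
move=> sGG' /andP[inj_f /forallP f_edges]; rewrite /embeds_via inj_f.
apply/forallP => e; apply/implyP => /(implyP (f_edges e)); exact: (subsetP sGG').
Qed.

Lemma copy_set_mono G G' : G \subset G' -> copy_set G \subset copy_set G'.
Proof.
move=> sGG'; apply/subsetP => X /imsetP[f]; rewrite inE => f_emb ->.
by apply/imsetP; exists f; rewrite // inE (embeds_via_mono sGG').
Qed.

Lemma copies_mono G G' : G \subset G' -> copies EH G <= copies EH G'.
Proof. by move=> sGG'; rewrite !copiesE subset_leq_card ?copy_set_mono. Qed.

Lemma copies_ltn G G' (f : {ffun VH -> V}) (e : {set VH}) :
  G \subset G' -> embeds_via EH G' f -> e \in EH -> f @: e \notin G ->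
  copies EH G < copies EH G'.
Proof.
move=> sGG' f_emb eH feG; rewrite !copiesE; apply/proper_card/properP.
split; first exact: copy_set_mono.
exists [set f @: e' | e' : {set VH} in EH]; first by apply/imsetP; exists f; rewrite ?inE.
apply/imsetP => -[g]; rewrite inE => /andP[_ /forallP g_edges] fEH.
have : f @: e \in [set g @: e' | e' : {set VH} in EH] by rewrite -fEH; apply: imset_f.
by case/imsetP=> e' e'H fe; move: feG; rewrite fe (implyP (g_edges e')).
Qed.

End Copies.

Section GameValue.
Variables (VH VF : finType) (EH : {set {set VH}}) (EF : {set {set VF}}) (n : nat).
Implicit Types (C B : {set {set 'I_n}}) (e : {set 'I_n}) (t k : nat).

Lemma score_le_top C : score EH C <= score_top n.
Proof. exact: max_card. Qed.

Lemma gval_le_top k turnC C B : gval EH EF k turnC C B <= score_top n.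
Proof.
elim: k turnC C B => [|k IHk] [] C B /=; try case: ifP => _; try exact: score_le_top.
  by apply/bigmax_leqP => e _; apply: IHk.
by apply: (big_ind (leq^~ _)) => // a b _ b_top; rewrite geq_min b_top orbT.
Qed.

Lemma gval_ge_score k turnC C B : score EH C <= gval EH EF k turnC C B.
Proof.
elim: k turnC C B => [|k IHk] [] C B //=; case: ifP => // /negbT/set0Pn[e eC].
  apply: leq_trans (copies_mono _ (subsetUr [set e] C)) _.
  exact: leq_trans (IHk _ _ _) (leq_bigmax_cond _ eC).
apply: (big_ind (leq _)) => [|a b ha hb|f _]; last exact: IHk.
  exact: score_le_top.
by rewrite leq_min ha.
Qed.

Lemma cmoves_sub C B : cmoves EF C B \subset bmoves C B.
Proof. by apply/subsetP => e; rewrite !inE => /andP[-> /andP[-> _]]. Qed.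

Lemma bmovesP C B e :
  reflect [/\ e \in edgesK n, e \notin C & e \notin B] (e \in bmoves C B).
Proof. by rewrite !inE; apply: (iffP and3P) => -[]. Qed.

Lemma bmoves_shrink C B C' B' e :
  C \subset C' -> B \subset B' -> e \in bmoves C B -> e \in C' :|: B' ->
  #|bmoves C' B'| < #|bmoves C B|.
Proof.
move=> sCC' sBB' /bmovesP[eK eC eB] eC'B'; apply/proper_card/properP; split.
  apply/subsetP => f /bmovesP[fK fC' fB']; apply/bmovesP; split=> //.
    by apply: contra fC'; apply: (subsetP sCC').
  by apply: contra fB'; apply: (subsetP sBB').
exists e; first exact/bmovesP.
by apply/bmovesP => -[_]; move: eC'B'; rewrite in_setU => /orP[] ->.
Qed.

(* The fuel of [gval] is irrelevant once it covers the free edges, so a guarantee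
   is required for every such fuel. *)
Definition secures t turnC C B :=
  forall k, #|bmoves C B| <= k -> t <= gval EH EF k turnC C B.

Lemma secures_score t turnC C B : t <= score EH C -> secures t turnC C B.
Proof. by move=> t_le k _; apply: leq_trans t_le (gval_ge_score _ _ _ _). Qed.

Lemma secures_done t turnC C B :
  bmoves C B = set0 -> secures t turnC C B -> t <= score EH C.
Proof. by move=> no_move /(_ 0); rewrite no_move cards0; apply. Qed.

Lemma secures_cmove t C B e :
  e \in cmoves EF C B -> secures t false (e |: C) B -> secures t true C B.
Proof.
move=> eCB win k movesk; have eB := subsetP (cmoves_sub C B) e eCB.
have ltk : #|bmoves (e |: C) B| < k.
  by apply: leq_trans movesk; apply: bmoves_shrink eB _; rewrite ?subsetUr ?inE ?eqxx.
case: k movesk ltk => // k _ ltk /=.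
case: ifP => [/eqP nomove|_]; first by move: eCB; rewrite nomove inE.
exact: leq_trans (win k ltk) (leq_bigmax_cond _ eCB).
Qed.

Lemma secures_bmoves t C B :
  (forall e, e \in bmoves C B -> secures t true C (e |: B)) ->
  (bmoves C B = set0 -> t <= score EH C) -> secures t false C B.
Proof.
move=> win stuck [|k] movesk /=.
  by apply: stuck; apply/eqP; rewrite -cards_eq0 -leqn0.
case: ifP => [/eqP/stuck //|/negbT/set0Pn[e0 e0CB]].
have next e : e \in bmoves C B -> t <= gval EH EF k true C (e |: B).
  move=> eCB; apply: win => //; rewrite -ltnS; apply: leq_trans movesk.
  by apply: bmoves_shrink (subxx _) (subsetUr _ _) eCB _; rewrite !inE eqxx orbT.
apply: (big_ind (leq t)) => [|a b ta tb|]; last exact: next.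
  exact: leq_trans (next _ e0CB) (gval_le_top _ _ _ _).
by rewrite leq_min ta.
Qed.

Lemma g_value_ge t : secures t true set0 set0 -> t <= g_value EH EF n.
Proof.
by apply; apply/subset_leq_card/subsetP => e /bmovesP[].
Qed.

End GameValue.

(** * Degrees *)

Section Degrees.
Variable V : finType.
Implicit Types (G : {set {set V}}) (e : {set V}) (u w : V).

Definition deg G u := #|[set e in G | u \in e]|.

Definition nbr G u := [set w | [set u; w] \in G].

Lemma in_nbr G u w : (w \in nbr G u) = ([set u; w] \in G).
Proof. by rewrite inE. Qed.

Lemma deg_setU1 G e u : e \notin G -> deg (e |: G) u = deg G u + (u \in e).
Proof.
move=> eG; rewrite /deg; case: (boolP (u \in e)) => ue.
  have -> : [set f in e |: G | u \in f] = e |: [set f in G | u \in f].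
    by apply/setP => f; rewrite !inE; case: (f =P e) => [->|].
  by rewrite cardsU1 inE (negbTE eG) addnC.
rewrite addn0; apply: eq_card => f; rewrite !inE.
by case: (f =P e) => [->|]; rewrite ?(negbTE ue) ?andbF.
Qed.

Lemma deg_setU1_le G e u : deg (e |: G) u <= (deg G u).+1.
Proof.
case: (boolP (e \in G)) => eG; first by rewrite (setUidPr _) ?sub1set // leqnSn.
by rewrite deg_setU1 // -addn1 leq_add2l leq_b1.
Qed.

Lemma deg_mono G G' u : G \subset G' -> deg G u <= deg G' u.
Proof.
move=> sGG'; apply/subset_leq_card/subsetP => f; rewrite !inE.
by case/andP => /(subsetP sGG') -> ->.
Qed.

Lemma deg0_notin G e u : deg G u = 0 -> u \in e -> e \notin G.
Proof.
move/eqP; rewrite cards_eq0 => /eqP noedge ue; apply/negP => eG.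
by move/setP: noedge => /(_ e); rewrite !inE eG ue.
Qed.

Lemma set2_inj u : injective (fun w => [set u; w]).
Proof.
move=> a b uab; have : a \in [set u; b] by rewrite -uab !inE eqxx orbT.
rewrite !inE => /orP[/eqP au|/eqP //].
have : b \in [set u; a] by rewrite uab !inE eqxx orbT.
by rewrite !inE au orbb => /eqP.
Qed.

Lemma card_nbr G u : #|nbr G u| <= deg G u.
Proof.
rewrite /deg -(card_imset _ (@set2_inj u)); apply/subset_leq_card/subsetP => f.
by case/imsetP => w; rewrite inE => uwG ->; rewrite inE uwG !inE eqxx.
Qed.

Lemma card_nbr_setU1 G e u :
  #|nbr (e |: G) u| <= (deg G u).+1.
Proof. exact: leq_trans (card_nbr _ _) (deg_setU1_le _ _ _). Qed.

Lemma handshake G : G \subset complete_edges V -> \sum_u deg G u = 2 * #|G|.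
Proof.
move=> sG; transitivity (\sum_u \sum_(e in G) (u \in e : nat)).
  apply: eq_bigr => u _; rewrite /deg -sum1_card big_mkcond [RHS]big_mkcond /=.
  by apply: eq_bigr => e _; rewrite inE; case: (e \in G); case: (u \in e).
rewrite exchange_big /= -sum1_card big_distrr /=; apply: eq_bigr => e eG.
move/(subsetP sG): eG; rewrite inE => /eqP <-.
by rewrite muln1 -sum1_card [RHS]big_mkcond.
Qed.

End Degrees.

Lemma maxdeg3_S4_free (V : finType) (G : {set {set V}}) :
  (forall u, deg G u <= 3) -> free_of S4 G.
Proof.
move=> deg3; apply/negP => /existsP[f /andP[/injectiveP inj_f /forallP f_edges]].
pose c := f ord0.
have leaf_edge (i : 'I_5) : i != ord0 -> [set c; f i] \in G.
  move=> i0; move/implyP: (f_edges [set ord0; i]); rewrite imset_set2; apply.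
  by apply/imsetP; exists i; rewrite ?inE.
have inj_leaf : injective (fun i => [set c; f i]) by move=> i j /set2_inj/inj_f.
have : #|[set~ (ord0 : 'I_5)]| <= deg G c.
  rewrite -(card_imset _ inj_leaf); apply/subset_leq_card/subsetP => e.
  by case/imsetP => i; rewrite !inE => i0 ->; rewrite leaf_edge // !inE eqxx.
by rewrite cardsC1 card_ord leqNgt ltnS deg3.
Qed.

Lemma embeds_triangle (V : finType) (G : {set {set V}}) (a b c : V) :
  a != b -> a != c -> b != c ->
  [set a; b] \in G -> [set a; c] \in G -> [set b; c] \in G ->
  embeds_via K3 G [ffun i : 'I_3 => tnth [tuple a; b; c] i].
Proof.
move=> ab ac bc abG acG bcG.
have inj_f : injective [ffun i : 'I_3 => tnth [tuple a; b; c] i].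
  move=> i j; rewrite !ffunE !(tnth_nth a).
  case: i j => -[|[|[|?]]] ? [[|[|[|?]]] ?] //= eq_ij; try exact: val_inj;
    by move: ab ac bc; rewrite eq_ij eqxx.
apply/andP; split; first exact/injectiveP.
apply/forallP => e; apply/implyP; rewrite inE => /cards2P[i [j [ij ->]]].
rewrite imset_set2 !ffunE.
by case: i j ij => -[|[|[|?]]] ? [[|[|[|?]]] ?] //= _; rewrite 1?setUC.
Qed.

Lemma copies_K3_ltn (V : finType) (G G' : {set {set V}}) (a b c : V) :
  a != b -> a != c -> b != c ->
  [set a; b] \in G' -> [set a; c] \in G' -> [set b; c] \in G' ->
  G \subset G' -> [set a; b] \notin G -> copies K3 G < copies K3 G'.
Proof.
move=> ab ac bc abG acG bcG sGG' abnG.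
apply: (copies_ltn sGG' (embeds_triangle ab ac bc abG acG bcG) (e := [set ord0; 1%R])).
  by rewrite inE cards2.
by rewrite imset_set2 !ffunE.
Qed.

(** * Constructor's strategy *)

Section Strategy.
Variables n d : nat.
Notation V := 'I_n.
Notation E := {set {set 'I_n}}.
Implicit Types (C B : E) (u : V).
Notation score := (score K3).
Notation secures := (secures K3 S4).

Lemma set2_edge (a b : V) : a != b -> [set a; b] \in edgesK n.
Proof. by rewrite inE cards2 => ->. Qed.

Definition low C := [set u | deg C u <= 1].
Definition fresh C B := [set u | (deg C u == 0) && (deg B u <= d)].
Definition pendant C B := [set u | (deg C u == 1) && (deg B u <= d)].
Definition heavy B := [set u | d < deg B u].

Record invariant C B : Prop := Invariant {
  invariant_C : C \subset edgesK n;
  invariant_B : B \subset edgesK n;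
  invariant_deg : forall u, deg C u <= 3;
  invariant_card : #|B| <= #|C|;
  invariant_potential : n <= 3 * score C + #|low C|;
  invariant_pendant : #|pendant C B| <= 2 }.

Definition target := (n - (3 * d + 8 + (3 * n) %/ d.+1)) %/ 3.

Lemma card_heavy C B : invariant C B -> #|heavy B| * d.+1 <= 3 * n.
Proof.
case=> sC sB deg3 BC _ _.
apply: (@leq_trans (\sum_u deg B u)).
  rewrite -sum_nat_const [leqRHS](bigID (mem (heavy B))) /=.
  by apply: leq_trans (leq_addr _ _); apply: leq_sum => u; rewrite inE.
rewrite handshake //.
apply: leq_trans (_ : 2 * #|C| <= _); first by rewrite leq_mul2l BC orbT.
rewrite -handshake //; apply: leq_trans (_ : \sum_(u : V) 3 <= _).
  by apply: leq_sum => u _.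
by rewrite sum_nat_const card_ord mulnC.
Qed.

Lemma target_le_score C B :
  invariant C B -> #|fresh C B| < 3 * d + 7 -> target <= score C.
Proof.
move=> inv few_fresh; have [_ _ _ _ potential pendant2] := inv.
have : #|low C| <= #|fresh C B| + #|pendant C B| + #|heavy B|.
  apply: leq_trans (_ : #|(fresh C B :|: pendant C B) :|: heavy B| <= _).
    apply/subset_leq_card/subsetP => u; rewrite !inE.
    by case: (ltnP d (deg B u)); rewrite ?orbT ?andbT ?orbF //; case: (deg C u) => [|[]].
  apply: leq_trans (leq_card_setU _ _).1 _; rewrite leq_add2r.
  exact: (leq_card_setU _ _).1.
have : #|heavy B| <= (3 * n) %/ d.+1 by rewrite leq_divRL // (card_heavy inv).
rewrite /target; lia.
Qed.

Lemma potential_grow C C' :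
  n <= 3 * score C + #|low C| -> score C < score C' -> #|low C :\: low C'| <= 3 ->
  n <= 3 * score C' + #|low C'|.
Proof.
move=> potential more lost.
have : #|low C| <= #|low C :\: low C'| + #|low C'|.
  by rewrite -(cardsID (low C') (low C)) addnC leq_add2l subset_leq_card ?subsetIr.
lia.
Qed.

Lemma pendant_grow C B C' B' (X : {set V}) :
  B \subset B' -> (forall u, u \notin X -> deg C' u = deg C u) ->
  pendant C' B' \subset (pendant C B :\: X) :|: [set u in X | deg C' u == 1].
Proof.
move=> sBB' same_deg; apply/subsetP => u; rewrite !inE => /andP[C'u1 B'u].
case: (boolP (u \in X)) => uX; rewrite ?C'u1 ?orbT // orbF -same_deg // C'u1 /=.
exact: leq_trans (deg_mono _ sBB') B'u.
Qed.

Lemma cmove_pair C B (a b : V) :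
  a != b -> [set a; b] \notin C -> [set a; b] \notin B -> (forall u, deg C u <= 3) ->
  deg C a <= 2 -> deg C b <= 2 ->
  [set a; b] \in cmoves S4 C B /\ (forall u, deg ([set a; b] |: C) u <= 3).
Proof.
move=> ab abC abB deg3 a2 b2.
have deg3' u : deg ([set a; b] |: C) u <= 3.
  rewrite deg_setU1 // !inE.
  by case: eqP => [->|_]; case: eqP => [->|_] //=; rewrite ?addn1 ?addn0 ?deg3.
by split=> //; rewrite !inE cards2 ab abC abB maxdeg3_S4_free.
Qed.

Section Round.
Variables C B : E.
Hypothesis invCB : invariant C B.
Hypothesis IH : forall C' B', invariant C' B' ->
  #|bmoves C' B'| < #|bmoves C B| -> secures target true C' B'.

Lemma close_round C' B' e :
  C \subset C' -> B \subset B' -> B' \subset edgesK n ->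
  e \in C' -> e \notin C -> e \notin B ->
  (forall B'', B' \subset B'' -> B'' \subset edgesK n -> #|B''| <= #|B'|.+1 ->
     invariant C' B'') ->
  secures target false C' B'.
Proof.
move=> sCC' sBB' sB'K eC' eC eB inv'.
have eCB : e \in bmoves C B.
  apply/bmovesP; split=> //.
  exact: subsetP (invariant_C (inv' _ (subxx _) sB'K (leqnSn _))) _ eC'.
have shrink B'' : B' \subset B'' -> #|bmoves C' B''| < #|bmoves C B|.
  move=> sB'B''; apply: bmoves_shrink sCC' (subset_trans sBB' sB'B'') eCB _.
  by rewrite inE eC'.
apply: secures_bmoves => [f /bmovesP[fK _ _]|stuck].
  apply: IH (shrink _ (subsetUr _ _)); apply: inv'; rewrite ?subsetUr ?cardsU1_leS //.
  by rewrite subUset sub1set fK.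
apply: secures_done stuck _.
exact: IH (inv' _ (subxx _) sB'K (leqnSn _)) (shrink _ (subxx _)).
Qed.

Section Triangle.
Variables (x y z : V) (B' : E).
Hypotheses (x0 : deg C x = 0) (y0 : deg C y = 0) (z0 : deg C z = 0).
Hypotheses (xy : x != y) (xz : x != z) (yz : y != z).
Hypotheses (xyB : [set x; y] \notin B) (sBB' : B \subset B') (sB'K : B' \subset edgesK n).
Hypotheses (cardB' : #|B'| <= #|B| + 2) (yzB' : [set y; z] \notin B').

Let C2 := [set x; z] |: ([set x; y] |: C).
Let C3 := [set y; z] |: C2.

Let xyC : [set x; y] \notin C.
Proof. by apply: (deg0_notin x0); rewrite !inE eqxx. Qed.

Let xzC1 : [set x; z] \notin [set x; y] |: C.
Proof.
rewrite in_setU1 negb_or set2_neqr ?(deg0_notin x0) ?inE ?eqxx //.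
by rewrite negb_or eq_sym xz eq_sym yz.
Qed.

Let yzC2 : [set y; z] \notin C2.
Proof.
rewrite !in_setU1 !negb_or set2_neq ?set2_neqr ?(deg0_notin y0) ?inE ?eqxx //.
  by rewrite negb_or eq_sym xz eq_sym yz.
by rewrite negb_or eq_sym xy yz.
Qed.

Let deg_C3 u :
  deg C3 u = deg C u + (u \in [set x; y]) + (u \in [set x; z]) + (u \in [set y; z]).
Proof. by rewrite !deg_setU1. Qed.

Lemma deg_triangle_in u : u \in [set x; y; z] -> deg C3 u = 2.
Proof.
have [yx zx zy] : [/\ y != x, z != x & z != y] by split; rewrite eq_sym.
rewrite deg_C3 !inE => /orP[/orP[]|] /eqP->;
  by rewrite ?eqxx ?x0 ?y0 ?z0 /= ?(negbTE xy, negbTE xz, negbTE yz, negbTE yx, negbTE zx, negbTE zy).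
Qed.

Lemma deg_triangle_out u : u \notin [set x; y; z] -> deg C3 u = deg C u.
Proof.
rewrite deg_C3 !inE => /norP[/norP[ux uy] uz].
by rewrite (negbTE ux) (negbTE uy) (negbTE uz) !addn0.
Qed.

Lemma invariant_triangle B'' :
  B' \subset B'' -> B'' \subset edgesK n -> #|B''| <= #|B'|.+1 -> invariant C3 B''.
Proof.
move=> sB'B'' sB''K cardB''; have [sCK _ deg3 BC potential pendant2] := invCB.
have sCC3 : C \subset C3 by apply/subsetP => e eC; rewrite !in_setU1 eC !orbT.
have deg_C3_le3 u : deg C3 u <= 3.
  case: (boolP (u \in [set x; y; z])) => uT; first by rewrite deg_triangle_in.
  by rewrite deg_triangle_out.
split=> //.
- by rewrite !subUset !sub1set !set2_edge.
- rewrite /C3 /C2 !cardsU1 yzC2 xzC1 xyC /= !add1n; apply: (leq_trans cardB'').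
  by rewrite ltnS (leq_trans cardB') // addn2 !ltnS.
- apply: potential_grow potential _ _.
    apply: (copies_K3_ltn xy xz yz) xyC; rewrite // ?inE ?eqxx ?orbT //.
  apply: leq_trans (card_set3 x y z); apply/subset_leq_card/subsetP => u.
  move=> /setDP[Cu C3u]; case: (boolP (u \in [set x; y; z])) => // uT.
  by move: C3u Cu; rewrite !inE deg_triangle_out // => /negbTE->.
- apply: leq_trans pendant2; apply: leq_trans (subset_leq_card (pendant_grow _ _)) _.
  + exact: subset_trans sBB' (subset_trans sB'B'' _).
  + exact: deg_triangle_out.
  apply: subset_leq_card; rewrite subUset subsetDl /=; apply/subsetP => u.
  by rewrite inE => /andP[uT]; rewrite deg_triangle_in.
Qed.

Lemma secures_triangle : secures target true C2 B'.
Proof.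
have deg_C2 u : deg C2 u <= deg C3 u by apply/deg_mono/subsetU1.
have deg3 := invariant_deg (invariant_triangle (subxx _) sB'K (leqnSn _)).
have deg_C2_2 u : u \in [set x; y; z] -> deg C2 u <= 2.
  by move=> uT; apply: leq_trans (deg_C2 u) _; rewrite deg_triangle_in.
have [yz_move _] := cmove_pair yz yzC2 yzB' (fun u => leq_trans (deg_C2 u) (deg3 u))
  (deg_C2_2 y ltac:(by rewrite !inE eqxx orbT)) (deg_C2_2 z ltac:(by rewrite !inE eqxx orbT)).
apply: secures_cmove yz_move _.
apply: (close_round (e := [set x; y])) invariant_triangle => //.
- by apply/subsetP => e eC; rewrite !in_setU1 eC !orbT.
- by rewrite !inE eqxx !orbT.
Qed.

End Triangle.

Section Detour.
Variables (x v : V).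
Hypotheses (x0 : deg C x = 0) (v1 : deg C v <= 1) (vx : v != x).
Hypothesis vQ : (v \in pendant C B) || (#|pendant C B| <= 1).

Section DetourClose.
Variables (w w' : V) (B3 : E).
Hypotheses (w0 : deg C w = 0) (w'0 : deg C w' = 0).
Hypotheses (xw : x != w) (xw' : x != w') (ww' : w != w') (vw : v != w) (vw' : v != w').
Hypotheses (vxB : [set v; x] \notin B) (sBB3 : B \subset B3) (sB3K : B3 \subset edgesK n).
Hypotheses (cardB3 : #|B3| <= #|B| + 3) (vwB3 : [set v; w] \notin B3).

Let C3 := [set v; x] |: ([set x; w] |: ([set x; w'] |: C)).
Let C4 := [set v; w] |: C3.

Let xw'C : [set x; w'] \notin C.
Proof. by apply: (deg0_notin x0); rewrite !inE eqxx. Qed.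

Let xwC1 : [set x; w] \notin [set x; w'] |: C.
Proof.
rewrite in_setU1 negb_or set2_neqr ?(deg0_notin x0) ?inE ?eqxx //.
by rewrite negb_or eq_sym xw ww'.
Qed.

Lemma vx_notin_detour : [set v; x] \notin [set x; w] |: ([set x; w'] |: C).
Proof.
rewrite !in_setU1 !negb_or !set2_neq ?(deg0_notin x0) ?inE ?eqxx ?orbT //.
  by rewrite negb_or vx vw'.
by rewrite negb_or vx vw.
Qed.

Lemma vw_notin_detour : [set v; w] \notin C3.
Proof.
rewrite !in_setU1 !negb_or set2_neqr ?set2_neq ?(deg0_notin w0) ?inE ?eqxx ?orbT //.
- by rewrite negb_or vx vw'.
- by rewrite negb_or vx vw.
- by rewrite negb_or eq_sym vw eq_sym xw.
Qed.

Let deg_C4 u : deg C4 u = deg C u + (u \in [set x; w']) + (u \in [set x; w])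
  + (u \in [set v; x]) + (u \in [set v; w]).
Proof. by rewrite !deg_setU1 ?vw_notin_detour ?vx_notin_detour. Qed.

Lemma deg_detour_in :
  [/\ deg C4 x = 3, deg C4 v = (deg C v).+2, deg C4 w = 2 & deg C4 w' = 1].
Proof.
have [wx w'x w'w] : [/\ w != x, w' != x & w' != w] by split; rewrite eq_sym.
have [xv wv w'v] : [/\ x != v, w != v & w' != v] by split; rewrite eq_sym.
rewrite !deg_C4 !inE !eqxx ?x0 ?w0 ?w'0.
rewrite ?(negbTE xw, negbTE xw', negbTE ww', negbTE vw, negbTE vw', negbTE vx,
  negbTE wx, negbTE w'x, negbTE w'w, negbTE xv, negbTE wv, negbTE w'v) /=.
by rewrite !addn0 !addn1.
Qed.

Lemma deg_detour_out u : u \notin [set x; v; w; w'] -> deg C4 u = deg C u.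
Proof.
rewrite deg_C4 !inE => /norP[/norP[/norP[ux uv] uw] uw'].
by rewrite (negbTE ux) (negbTE uv) (negbTE uw) (negbTE uw') !addn0.
Qed.

Lemma invariant_detour B'' :
  B3 \subset B'' -> B'' \subset edgesK n -> #|B''| <= #|B3|.+1 -> invariant C4 B''.
Proof.
move=> sB3B'' sB''K cardB''; have [sCK _ deg3 BC potential pendant2] := invCB.
have [x3 v2 w2 w'1] := deg_detour_in.
have deg_C4_le3 u : deg C4 u <= 3.
  case: (boolP (u \in [set x; v; w; w'])) => [|uX]; last by rewrite deg_detour_out.
  by rewrite !inE => /orP[/orP[/orP[]|]|] /eqP->; rewrite ?x3 ?v2 ?w2 ?w'1 ?ltnS.
split=> //.
- by rewrite !subUset !sub1set !set2_edge // eq_sym.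
- rewrite /C4 /C3 !cardsU1 vw_notin_detour vx_notin_detour xwC1 xw'C /= !add1n.
  by apply: (leq_trans cardB''); rewrite ltnS (leq_trans cardB3) // addn3 !ltnS.
- apply: potential_grow potential _ _.
    apply: (copies_K3_ltn vx vw xw) (deg0_notin x0 _) => //; rewrite ?inE ?eqxx ?orbT //.
    by apply/subsetP => e eC; rewrite !in_setU1 eC !orbT.
  apply: leq_trans (card_set3 x v w); apply/subset_leq_card/subsetP => u.
  move=> /setDP[Cu C4u]; rewrite !inE.
  case: (eqVneq u w') C4u => [->|uw' C4u]; first by rewrite inE w'1.
  apply: contraR C4u => uXvw; rewrite inE deg_detour_out; first by move: Cu; rewrite inE.
  by rewrite !inE negb_or uXvw.
- apply: leq_trans (subset_leq_card (pendant_grow _ _)) _.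
  + exact: subset_trans sBB3 sB3B''.
  + exact: deg_detour_out.
  apply: leq_trans (leq_card_setU _ _).1 _.
  have -> : [set u in [set x; v; w; w'] | deg C4 u == 1] = [set w'].
    apply/setP => u; rewrite !inE; apply/idP/idP => [|/eqP->]; last by rewrite eqxx orbT w'1.
    by case/andP=> /orP[/orP[/orP[]|]|] /eqP->; rewrite ?x3 ?v2 ?w2 // eqxx.
  rewrite cards1 addn1 ltnS.
  apply: leq_trans (_ : #|pendant C B :\ v| <= 1).
    by apply/subset_leq_card/setDS; rewrite sub1set !inE eqxx orbT.
  move: vQ pendant2; rewrite (cardsD1 v (pendant C B)).
  by case: (v \in pendant C B) => /= [_|]; rewrite ?add1n ?add0n ?ltnS.
Qed.

Lemma secures_detour_close : secures target true C3 B3.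
Proof.
have deg3 := invariant_deg (invariant_detour (subxx _) sB3K (leqnSn _)).
have deg_C3 u : deg C4 u = (deg C3 u) + (u \in [set v; w]).
  by rewrite deg_setU1 ?vw_notin_detour.
have [_ v2 w2 _] := deg_detour_in.
have v_le2 : deg C3 v <= 2.
  by move: (deg_C3 v); rewrite v2 !inE eqxx addn1 => -[<-].
have w_le2 : deg C3 w <= 2.
  by move: (deg_C3 w); rewrite w2 !inE eqxx orbT addn1 => -[<-].
have [vw_move _] := cmove_pair vw vw_notin_detour vwB3
  (fun u => leq_trans (deg_mono u (subsetU1 _ _)) (deg3 u)) v_le2 w_le2.
apply: secures_cmove vw_move _.
apply: (close_round (e := [set v; x])) invariant_detour => //.
- by apply/subsetP => e eC; rewrite !in_setU1 eC !orbT.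
- by rewrite !inE eqxx !orbT.
- by apply: (deg0_notin x0); rewrite !inE eqxx orbT.
Qed.

Lemma vx_cmove : [set v; x] \notin B3 ->
  [set v; x] \in cmoves S4 ([set x; w] |: ([set x; w'] |: C)) B3.
Proof.
move=> vxB3; have deg3 := invariant_deg (invariant_detour (subxx _) sB3K (leqnSn _)).
have sC2C4 : [set x; w] |: ([set x; w'] |: C) \subset C4.
  by rewrite /C4 /C3; do 2!apply: subset_trans (subsetU1 _ _).
apply: (proj1 (cmove_pair vx vx_notin_detour vxB3
  (fun u => leq_trans (deg_mono u sC2C4) (deg3 u)) _ _)).
  rewrite !deg_setU1 // !inE (negbTE vx) (negbTE vw) (negbTE vw') !addn0.
  exact: leq_trans v1 _.
by rewrite !deg_setU1 // !inE !eqxx x0.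
Qed.

End DetourClose.

Lemma secures_detour a b B2 :
  deg C a = 0 -> deg C b = 0 -> x != a -> x != b -> a != b -> v != a -> v != b ->
  B \subset B2 -> B2 \subset edgesK n -> #|B2| <= #|B| + 2 ->
  [set v; x] \notin B2 -> [set v; a] \notin B2 -> [set v; b] \notin B2 ->
  secures target true ([set x; a] |: ([set x; b] |: C)) B2.
Proof.
move=> a0 b0 xa xb ab va vb sBB2 sB2K cardB2 vxB2 vaB2 vbB2.
have vxB : [set v; x] \notin B by apply: contra vxB2; apply: (subsetP sBB2).
have cardB3 f : #|f |: B2| <= #|B| + 3 by rewrite (leq_trans (cardsU1_leS _ _)) // addnS.
have vx_move : [set v; x] \in cmoves S4 ([set x; a] |: ([set x; b] |: C)) B2.
  by apply: vx_cmove; rewrite // (leq_trans cardB2) // leq_add2l.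
apply: secures_cmove vx_move _.
apply: secures_bmoves => [f /bmovesP[fK _ _]|stuck].
  have sBB3 : B \subset f |: B2 by apply: subset_trans sBB2 (subsetU1 _ _).
  have sB3K : f |: B2 \subset edgesK n by rewrite subUset sub1set fK.
  (* Blocker's reply takes at most one of [v; a] and [v; b]. *)
  case: (boolP ([set v; a] \in f |: B2)) => [|vaB3]; last exact: secures_detour_close.
  rewrite in_setU1 (negbTE vaB2) orbF => /eqP vaf; subst f.
  have ba : b != a by rewrite eq_sym.
  rewrite setUCA; apply: secures_detour_close => //.
  by rewrite in_setU1 negb_or vbB2 andbT set2_neqr // !inE negb_or eq_sym vb eq_sym ab.
have : [set v; a] \in bmoves ([set v; x] |: ([set x; a] |: ([set x; b] |: C))) B2.
  by apply/bmovesP; rewrite set2_edge // vw_notin_detour.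
by rewrite stuck inE.
Qed.

End Detour.

Section Opening.
Hypothesis many_fresh : 3 * d + 7 <= #|fresh C B|.
Variables (x y : V) (f1 : {set V}).
Hypotheses (x_fresh : x \in fresh C B) (y_fresh : y \in fresh C B) (xy : x != y).
Hypotheses (x_far : forall q, q \in pendant C B -> [set q; x] \notin B).
Hypotheses (y_far : forall q, q \in pendant C B -> [set q; y] \notin B).

Let B1 := f1 |: B.

Let freshP u : u \in fresh C B -> deg C u = 0 /\ deg B u <= d.
Proof. by rewrite inE => /andP[/eqP]. Qed.

Let nbrB1 u : deg B u <= d -> #|nbr B1 u| <= d.+1.
Proof. by move=> uB; apply: leq_trans (card_nbr_setU1 _ _ _) _. Qed.

Lemma exists_partner : exists v, [/\ v != x, v != y, deg C v <= 1, deg B v <= d &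
  [/\ [set x; v] \notin B1, [set y; v] \notin B1 &
       (v \in pendant C B) || (#|pendant C B| <= 1)]].
Proof.
have [x0 xB] := freshP x_fresh; have [y0 yB] := freshP y_fresh.
have pendantP q : q \in pendant C B -> [/\ deg C q = 1, deg B q <= d, q != x & q != y].
  rewrite inE => /andP[/eqP q1 qB]; split=> //; apply/eqP => qE; move: q1.
    by rewrite qE x0.
  by rewrite qE y0.
case: (boolP [exists q in pendant C B, ([set x; q] \notin B1) && ([set y; q] \notin B1)]).
  case/existsP=> q /and3P[qP xqB yqB]; have [q1 qB qx qy] := pendantP q qP.
  by exists q; split; rewrite ?q1 ?qP.
rewrite negb_exists => /forallP blocked.
(* As xq, yq are not in B, a pendant q is blocked only if f1 is xq or yq. *)
have f1E q : q \in pendant C B -> f1 = [set x; q] \/ f1 = [set y; q].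
  move=> qP; move: (blocked q); rewrite qP /= negb_and !negbK !in_setU1.
  rewrite [[set x; q]]setUC [[set y; q]]setUC (negbTE (x_far qP)) (negbTE (y_far qP)).
  by rewrite !orbF [[set q; _]]setUC [[set q; y]]setUC => /orP[] /eqP <-; [left|right].
have pendant1 : #|pendant C B| <= 1.
  apply/card_le1_eqP => q1 q2 q1P q2P; have [_ _ q2x q2y] := pendantP q2 q2P.
  have q2f1 : q2 \in f1 by case: (f1E q2 q2P) => ->; rewrite !inE eqxx orbT.
  apply/eqP; move: q2f1.
  by case: (f1E q1 q1P) => ->; rewrite !inE ?(negbTE q2x) ?(negbTE q2y).
have [v vF] : exists2 v, v \in fresh C B & v \notin [set x; y] :|: (nbr B1 x :|: nbr B1 y).
  apply: exists_notin; apply: leq_trans many_fresh.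
  apply: leq_ltn_trans (leq_card_setU _ _).1 _; rewrite cards2 xy.
  apply: leq_ltn_trans (leq_add (leqnn _) (leq_card_setU _ _).1) _.
  apply: (@leq_ltn_trans (2 + (d.+1 + d.+1))); last by rewrite /=; lia.
  by rewrite leq_add2l leq_add ?nbrB1.
rewrite !in_setU !inE !negb_or => /andP[/andP[vx vy] /andP[xvB yvB]].
have [v0 vB] := freshP vF.
exists v; split; rewrite ?v0 ?pendant1 ?orbT //.
by split; rewrite // /B1 in_setU1 negb_or; [exact: xvB | exact: yvB].
Qed.

Lemma exists_third v : deg B v <= d -> exists2 z, z \in fresh C B &
  z \notin [set x; y; v] :|: (nbr B1 x :|: nbr B1 y :|: nbr B1 v).
Proof.
move=> vB; have [[_ xB] [_ yB]] := (freshP x_fresh, freshP y_fresh).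
apply: exists_notin; apply: leq_trans many_fresh.
apply: leq_ltn_trans (leq_card_setU _ _).1 _.
apply: leq_ltn_trans (leq_add (leqnn _) (leq_card_setU _ _).1) _.
apply: leq_ltn_trans (leq_add (leqnn _) (leq_add (leq_card_setU _ _).1 (leqnn _))) _.
apply: (@leq_ltn_trans (3 + (d.+1 + d.+1 + d.+1))); last by rewrite /=; lia.
apply: leq_add; first exact: card_set3.
by apply: leq_add; [apply: leq_add|]; apply: nbrB1.
Qed.

Hypotheses (xyB : [set x; y] \notin B) (f1K : f1 \in edgesK n).
Hypothesis deg3_C1 : forall u, deg ([set x; y] |: C) u <= 3.

Lemma secures_second_move : secures target true ([set x; y] |: C) B1.
Proof.
have [[x0 _] [y0 _]] := (freshP x_fresh, freshP y_fresh).
have [v [vx vy v1 vB [xvB yvB vQ]]] := exists_partner.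
have [z zF] := exists_third vB.
rewrite in_setU negb_or => /andP[zxyv]; rewrite !in_setU !in_nbr !negb_or.
move=> /andP[/andP[xzB yzB] vzB].
move: zxyv; rewrite !inE !negb_or => /andP[/andP[zx zy] zv].
have [z0 _] := freshP zF.
have [xz yz vz] : [/\ x != z, y != z & v != z] by split; rewrite eq_sym.
have sBB1 : B \subset B1 := subsetU1 _ _.
have sB1K : B1 \subset edgesK n by rewrite subUset sub1set f1K (invariant_B invCB).
have xzC1 : [set x; z] \notin [set x; y] |: C.
  rewrite in_setU1 negb_or set2_neqr ?(deg0_notin z0) ?inE ?eqxx ?orbT //.
  by rewrite negb_or zx.
have xyC : [set x; y] \notin C by apply: (deg0_notin x0); rewrite !inE eqxx.
have x_le2 : deg ([set x; y] |: C) x <= 2 by rewrite deg_setU1 // x0 !inE eqxx.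
have z_le2 : deg ([set x; y] |: C) z <= 2.
  by rewrite deg_setU1 // z0 !inE (negbTE zx) (negbTE zy).
have [xz_move _] := cmove_pair xz xzC1 xzB deg3_C1 x_le2 z_le2.
apply: secures_cmove xz_move _.
apply: secures_bmoves => [f /bmovesP[fK _ _]|stuck].
  have sBB2 : B \subset f |: B1 by apply: subset_trans sBB1 (subsetU1 _ _).
  have sB2K : f |: B1 \subset edgesK n by rewrite subUset sub1set fK.
  have cardB2 : #|f |: B1| <= #|B| + 2.
    rewrite (leq_trans (cardsU1_leS _ _)) // addn2 ltnS; exact: cardsU1_leS.
  have [yzB2|] := boolP ([set y; z] \notin f |: B1).
    by apply: secures_triangle.
  (* Blocker took yz: close a triangle through v instead. *)
  rewrite negbK in_setU1 (negbTE yzB) orbF => /eqP yzf.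
  have vyz : v \notin [set y; z] by rewrite !inE negb_or vy vz.
  subst f; apply: (secures_detour (x := x) (v := v)); rewrite // 1?eq_sym //.
  - by rewrite in_setU1 negb_or set2_neq // [[set v; x]]setUC xvB.
  - by rewrite in_setU1 negb_or set2_neq.
  - by rewrite in_setU1 negb_or set2_neq // [[set v; y]]setUC yvB.
have : [set y; z] \in bmoves ([set x; z] |: ([set x; y] |: C)) B1.
  apply/bmovesP; split; rewrite ?set2_edge //.
  rewrite !in_setU1 !negb_or set2_neq ?set2_neqr ?(deg0_notin z0) ?inE ?eqxx ?orbT //.
    by rewrite negb_or zx zy.
  by rewrite negb_or eq_sym xy yz.
by rewrite stuck inE.
Qed.

End Opening.

Lemma exists_opening : 3 * d + 7 <= #|fresh C B| ->
  exists x y, [/\ x \in fresh C B, y \in fresh C B, x != y, [set x; y] \notin B &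
    forall q, q \in pendant C B -> [set q; x] \notin B /\ [set q; y] \notin B].
Proof.
move=> many_fresh; have [_ _ _ _ _ pendant2] := invCB.
pose NQ := \bigcup_(q in pendant C B) nbr B q.
have NQ_le : #|NQ| <= 2 * d.
  apply: leq_trans (card_bigcup_le _ _) _.
  apply: leq_trans (_ : \sum_(q in pendant C B) d <= _).
    by apply: leq_sum => q; rewrite inE => /andP[_]; apply: leq_trans (card_nbr _ _).
  by rewrite sum_nat_const leq_mul2r pendant2 orbT.
have far u q : u \notin NQ -> q \in pendant C B -> [set q; u] \notin B.
  by move=> uNQ qP; apply: contra uNQ => quB; apply/bigcupP; exists q; rewrite ?in_nbr.
have [x xF xNQ] : exists2 x, x \in fresh C B & x \notin NQ.
  by apply: exists_notin; apply: leq_trans many_fresh; apply: leq_ltn_trans NQ_le _; lia.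
have [y yF] : exists2 y, y \in fresh C B & y \notin x |: (NQ :|: nbr B x).
  apply: exists_notin; apply: leq_trans many_fresh.
  apply: (@leq_ltn_trans (2 * d + d).+1); last lia.
  apply: leq_trans (cardsU1_leS _ _) _; rewrite ltnS.
  apply: leq_trans (leq_card_setU _ _).1 _.
  rewrite leq_add // (leq_trans (card_nbr _ _)) //.
  by move: xF; rewrite inE => /andP[].
rewrite in_setU1 in_setU in_nbr !negb_or => /andP[yx /andP[yNQ xyB]].
by exists x, y; split; rewrite 1?eq_sym // => q qP; rewrite !far.
Qed.

Lemma secures_round : 3 * d + 7 <= #|fresh C B| -> secures target true C B.
Proof.
move=> many_fresh; have [x [y [xF yF xy xyB far]]] := exists_opening many_fresh.
have freshP u : u \in fresh C B -> deg C u = 0 /\ deg B u <= d.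
  by rewrite inE => /andP[/eqP].
have [[x0 xB] [y0 _]] := (freshP x xF, freshP y yF).
have xyC : [set x; y] \notin C by apply: (deg0_notin x0); rewrite !inE eqxx.
have [x_le2 y_le2] : deg C x <= 2 /\ deg C y <= 2 by rewrite x0 y0.
have [xy_move deg3_C1] := cmove_pair xy xyC xyB (invariant_deg invCB) x_le2 y_le2.
apply: secures_cmove xy_move _.
apply: secures_bmoves => [f /bmovesP[fK _ _]|stuck].
  by apply: secures_second_move => // q /far[].
have [z zF] : exists2 z, z \in fresh C B & z \notin [set x; y] :|: nbr B x.
  apply: exists_notin; apply: leq_trans many_fresh.
  apply: leq_ltn_trans (leq_card_setU _ _).1 _; rewrite cards2 xy.
  apply: (@leq_ltn_trans (2 + d)); last by rewrite /=; lia.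
  by rewrite leq_add2l (leq_trans (card_nbr _ _)).
rewrite in_setU in_nbr !inE !negb_or => /andP[/andP[zx zy] xzB].
have : [set x; z] \in bmoves ([set x; y] |: C) B.
  apply/bmovesP; split; rewrite ?set2_edge 1?eq_sym //.
  rewrite in_setU1 negb_or set2_neqr ?(deg0_notin x0) ?inE ?eqxx //.
  by rewrite negb_or zx zy.
by rewrite stuck inE.
Qed.

End Round.

Lemma secures_target C B : invariant C B -> secures target true C B.
Proof.
have [m] := ubnP #|bmoves C B|; elim: m C B => // m IHm C B lt_m inv.
case: (ltnP #|fresh C B| (3 * d + 7)) => [few|many].
  exact/secures_score/(target_le_score inv).
apply: secures_round many => // C' B' inv' lt_C'B'.
by apply: IHm inv'; apply: leq_trans lt_C'B' _; rewrite -ltnS.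
Qed.

Lemma invariant_empty : invariant set0 set0.
Proof.
have deg0 u : deg (set0 : E) u = 0.
  by apply/eqP; rewrite cards_eq0; apply/eqP/setP => e; rewrite !inE.
split; rewrite ?sub0set ?cards0 //.
- by move=> u; rewrite deg0.
- apply: leq_trans (leq_addl _ _); rewrite -[X in X <= _](card_ord n) -cardsT.
  by apply/subset_leq_card/subsetP => u _; rewrite inE deg0.
- rewrite (_ : pendant set0 set0 = set0) ?cards0 //.
  by apply/setP => u; rewrite !inE deg0.
Qed.

Lemma target_le_g_value : target <= g_value K3 S4 n.
Proof. exact/g_value_ge/secures_target/invariant_empty. Qed.

End Strategy.

(** * The asymptotic bound *)

Lemma strategy_loss_le D n d : 0 < D -> 36 * D * D + 20 * D <= n ->
  d = n %/ (6 * D) -> D * (3 * d + 10 + (3 * n) %/ d.+1) <= n.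
Proof.
move=> D0 large ->{d}; set d := n %/ (6 * D).
have d_le : d * (6 * D) <= n := leq_trunc_div _ _.
have d_gt : n < d.+1 * (6 * D) by apply: ltn_ceil; lia.
set q := (3 * n) %/ d.+1.
have q_le : q * d.+1 <= 3 * n := leq_trunc_div _ _.
have q_lt : q < 18 * D.
  rewrite -(ltn_pmul2r (_ : 0 < d.+1)) //; apply: leq_ltn_trans q_le _.
  have : 3 * n < 3 * (d.+1 * (6 * D)) by rewrite ltn_pmul2l.
  lia.
nia.
Qed.

Lemma g_value_K3_S4_lower D n : 0 < D -> 36 * D * D + 20 * D <= n ->
  D * n <= D * (3 * g_value K3 S4 n) + n.
Proof.
move=> D0 large; have := strategy_loss_le D0 large (erefl _).
have := target_le_g_value n (n %/ (6 * D)); rewrite /target.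
set d := n %/ (6 * D); set g := g_value K3 S4 n; set L := 3 * d + 8 + _ => g_ge loss.
have : n - L <= 3 * ((n - L) %/ 3) + 2 by lia.
nia.
Qed.

Import Order.TTheory GRing.Theory Num.Theory.
Local Open Scope ring_scope.

Theorem proposition3p5 :
  forall eps : rat, 0 < eps ->
  exists N : nat, forall n : nat, (N <= n)%N ->
    (n%:R / 3) * (1 - eps) <= (g_value K3 S4 n)%:R :> rat.
Proof.
move=> eps eps_gt0; set D := Num.Def.archi_bound eps^-1.
have invD : eps^-1 < D%:R by apply: archi_boundP; rewrite invr_ge0 ltW.
have D_gt0 : (0 < D)%N.
  by rewrite -(ltr0n rat); apply: le_lt_trans invD; rewrite invr_ge0 ltW.
have eps_D : 1 <= eps * D%:R.
  have : eps * eps^-1 < eps * D%:R by rewrite ltr_pM2l.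
  by rewrite mulfV ?lt0r_neq0 // => /ltW.
exists (36 * D * D + 20 * D)%N => n large.
have := g_value_K3_S4_lower D_gt0 large; rewrite -(ler_nat rat) natrD !natrM.
have n_ge0 : 0 <= n%:R :> rat by rewrite ler0n.
have D_gt0' : 0 < D%:R :> rat by rewrite ltr0n.
nra.
Qed.
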